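(* Let $V$ be a finite set of variables and $\mathcal C=\{C_1,\dots,C_m\}$ a set of betweenness constraints over $V$ containing no complete triple. Let $\phi:V\to\{0,1,2,3\}$ be chosen uniformly at random and let $X=w(\mathcal C,\phi)$. Then $\mathbb E[X^2]\ge \frac{11}{768}m$.
   Context: A betweenness constraint is $(v_i,\{v_j,v_k\})$ with $v_i,v_j,v_k\in V$ distinct; a bijection $\alpha:V\to\{1,\dots,|V|\}$ satisfies it if $\alpha(v_j)<\alpha(v_i)<\alpha(v_k)$ or $\alpha(v_k)<\alpha(v_i)<\alpha(v_j)$. For a constraint $C$, $vars(C)$ is its set of three variables; three distinct constraints $A,B,C\in\mathcal C$ form a complete triple if $vars(A)=vars(B)=vars(C)$. For $\phi:V\to\{0,1,2,3\}$ let $\ell_i(\phi)=|\phi^{-1}(i)|$. A random $\phi$-compatible bijection $\alpha$ is obtained by assigning, uniformly at random, the values $\sum_{i<j}\ell_i(\phi)+1,\dots,\sum_{i\le j}\ell_i(\phi)$ bijectively to the variables $v$ with $\phi(v)=j$, for each $j=0,1,2,3$. For a constraint $C_p$ let $\nu_p(\alpha)=1$ if $\alpha$ satisfies $C_p$ and $0$ otherwise; define $w(C_p,\phi)=\mathbb E[\nu_p(\alpha)]-1/3$, the expectation over a random $\phi$-compatible bijection $\alpha$ for fixed $\phi$, and $w(\mathcal C,\phi)=\sum_{p=1}^m w(C_p,\phi)$. *)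

From mathcomp Require Import all_boot all_order all_algebra.
Set Implicit Arguments. Unset Strict Implicit. Unset Printing Implicit Defensive.
Import Order.TTheory GRing.Theory Num.Theory.
Local Open Scope ring_scope.

(* A betweenness constraint (v_i, {v_j, v_k}) is represented by the triple
   (v_i, v_j, v_k); (i,j,k) and (i,k,j) denote the same constraint, see [ckey]. *)
Definition constraint (V : finType) := (V * V * V)%type.

Section Betweenness.
Variable V : finType.

Definition cmid (c : constraint V) : V := c.1.1.
Definition cend1 (c : constraint V) : V := c.1.2.
Definition cend2 (c : constraint V) : V := c.2.

Definition wf_constraint (c : constraint V) : bool :=
  [&& cmid c != cend1 c, cmid c != cend2 c & cend1 c != cend2 c].

Definition ckey (c : constraint V) : V * {set V} :=
  (cmid c, [set cend1 c; cend2 c]).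

Definition vars (c : constraint V) : {set V} :=
  [set cmid c; cend1 c; cend2 c].

Definition satisfies (alpha : V -> nat) (c : constraint V) : bool :=
  ((alpha (cend1 c) < alpha (cmid c)) && (alpha (cmid c) < alpha (cend2 c)))%N
  || ((alpha (cend2 c) < alpha (cmid c)) && (alpha (cmid c) < alpha (cend1 c)))%N.

Definition no_complete_triple (C : seq (constraint V)) : Prop :=
  forall A B D, A \in C -> B \in C -> D \in C ->
    ckey A != ckey B -> ckey B != ckey D -> ckey A != ckey D ->
    vars A = vars B -> vars B = vars D -> False.

Definition ell (phi : {ffun V -> 'I_4}) (i : 'I_4) : nat := #|[set v | phi v == i]|.

Definition lo (phi : {ffun V -> 'I_4}) (j : 'I_4) : nat :=
  (\sum_(i < 4 | (i < j)%N) ell phi i)%N.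

(* phi-compatible bijections V -> {0,...,|V|-1}  (0-indexed version of
   {1,...,|V|}; the shift is irrelevant for satisfaction). *)
Definition compatible (phi : {ffun V -> 'I_4}) (alpha : {ffun V -> 'I_#|V|}) : bool :=
  injectiveb alpha &&
  [forall v, (lo phi (phi v) <= alpha v < lo phi (phi v) + ell phi (phi v))%N].

Definition exp_sat (phi : {ffun V -> 'I_4}) (c : constraint V) : rat :=
  (#|[set alpha | compatible phi alpha && satisfies (fun v => nat_of_ord (alpha v)) c]|%:R)
  / (#|[set alpha | compatible phi alpha]|%:R).

Definition w1 (c : constraint V) (phi : {ffun V -> 'I_4}) : rat := exp_sat phi c - 3^-1.

Definition w (C : seq (constraint V)) (phi : {ffun V -> 'I_4}) : rat :=
  \sum_(c <- C) w1 c phi.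

Definition EX2 (C : seq (constraint V)) : rat :=
  (\sum_(phi : {ffun V -> 'I_4}) (w C phi) ^+ 2) / (#|{ffun V -> 'I_4}|%:R).

End Betweenness.

From mathcomp Require Import all_boot all_order all_algebra perm zify ring lra.
Import Order.TTheory GRing.Theory Num.Theory.
Set Implicit Arguments. Unset Strict Implicit. Unset Printing Implicit Defensive.
Local Open Scope ring_scope.

(* For fixed phi, whether a random phi-compatible bijection satisfies a
   constraint only depends on the blocks of its three variables: the
   probability is 1/3, 1/2 or 0/1 according as the middle variable shares its
   block with both, one or none of the endpoints.  Hence w(C_p, phi) is a fixed
   function f of (phi v_i, phi v_j, phi v_k).  Let g be the component of f
   orthogonal to every function of at most two of its arguments and
   G = sum_q g(C_q, phi).  Pointwise X^2 >= (2X - G) G, and in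
   E[(2X - G) G] = sum_(p,q) E[(2 f_p - g_p) g_q] a pair (p, q) contributes
   nothing unless vars(C_p) = vars(C_q); it contributes 11/384 when p = q and
   -11/768 when C_q has the same variables but another middle one.  Without
   complete triples each C_p has at most one such partner. *)

Lemma uniq_map_inj_in (T1 T2 : eqType) (f : T1 -> T2) (s : seq T1) :
  uniq (map f s) -> {in s &, injective f}.
Proof.
elim: s => [|a s IH] //= /andP[fa_s us] x y; rewrite !inE.
case/predU1P=> [->|xs]; case/predU1P=> [->|ys] // fxy.
- by move: fa_s; rewrite fxy map_f.
- by move: fa_s; rewrite -fxy map_f.
- exact: IH.
Qed.

Lemma sqr_ge_mul_sub (R : realDomainType) (a b : R) : (2 * a - b) * b <= a ^+ 2.
Proof. by rewrite -subr_ge0 (_ : _ - _ = (a - b) ^+ 2) ?sqr_ge0 //; ring. Qed.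

(* [vm_compute] cannot unfold [index_enum] on ['I_4], so sums over ['I_4] are
   expanded by hand before computing. *)
Lemma sum_ord4 (F : 'I_4 -> int) :
  \sum_(i < 4) F i =
  F (@Ordinal 4 0 isT) + F (@Ordinal 4 1 isT) + F (@Ordinal 4 2 isT) + F (@Ordinal 4 3 isT).
Proof.
rewrite !big_ord_recr big_ord0 /= add0r.
by congr (_ + _ + _ + _); congr F; apply: val_inj.
Qed.

(* 6 (Pr[satisfied] - 1/3) for a constraint whose middle variable lies in block
   a and whose endpoints lie in blocks b and c. *)
Definition wtab (a b c : 'I_4) : int :=
  if (a == b) && (a == c) then 0
  else if (a == b) || (a == c) then 1
  else if ((b < a < c) || (c < a < b))%N then 4 else -2.

(* 24 g, for g the component of [wtab] / 6 described above, listed in the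
   order 16 a + 4 b + c. *)
Definition ttab_seq : seq int :=
  [:: 0; 5; -1; -4; 5; 2; -2; -5; -1; -2; 2; 1; -4; -5; 1; 8;
     -10; -1; 7; 4; -1; 0; 2; -1; 7; 2; -4; -5; 4; -1; -5; 2;
      2; -5; -1; 4; -5; -4; 2; 7; -1; 2; 0; -1; 4; 7; -1; -10;
      8; 1; -5; -4; 1; 2; -2; -1; -5; -2; 2; 5; -4; -1; 5; 0].

Definition ttab (a b c : 'I_4) : int := nth 0 ttab_seq (16 * a + 4 * b + c).

Ltac ord4_cases x := case: x => [[|[|[|[|?]]]] ?] //.

Lemma ttab_sum1 b c : \sum_(k < 4) ttab k b c = 0.
Proof. by ord4_cases b; ord4_cases c; rewrite sum_ord4. Qed.

Lemma ttab_sum2 a c : \sum_(k < 4) ttab a k c = 0.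
Proof. by ord4_cases a; ord4_cases c; rewrite sum_ord4. Qed.

Lemma ttab_sum3 a b : \sum_(k < 4) ttab a b k = 0.
Proof. by ord4_cases a; ord4_cases b; rewrite sum_ord4. Qed.

Definition cube_corr (h : 'I_4 -> 'I_4 -> 'I_4 -> int) : int :=
  \sum_(a < 4) \sum_(b < 4) \sum_(c < 4) (8 * wtab a b c - ttab a b c) * h a b c.

Lemma cube_corr_ttab : cube_corr ttab = 1056.
Proof. by rewrite /cube_corr !sum_ord4; vm_compute. Qed.

Lemma cube_corr_rotated :
  [/\ cube_corr (fun a b c => ttab b a c) = -528,
      cube_corr (fun a b c => ttab b c a) = -528,
      cube_corr (fun a b c => ttab c a b) = -528
    & cube_corr (fun a b c => ttab c b a) = -528].
Proof. by split; rewrite /cube_corr !sum_ord4; vm_compute. Qed.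

Section CompatibleBijections.
Variable V : finType.
Implicit Types (phi : {ffun V -> 'I_4}) (al : {ffun V -> 'I_#|V|}).

Lemma sum_ell phi : (\sum_(i < 4) ell phi i)%N = #|V|.
Proof.
rewrite -sum1_card (partition_big (fun v => phi v) predT) //=.
by apply: eq_bigr => i _; rewrite /ell sum1dep_card cardsE.
Qed.

Lemma lo_add_ell phi i :
  (lo phi i + ell phi i = \sum_(k < 4 | (k <= i)%N) ell phi k)%N.
Proof.
rewrite [RHS](bigD1 i) //= addnC; congr (_ + _).
by apply: eq_bigl => k; rewrite ltn_neqAle andbC.
Qed.

Lemma lo_add_ell_le phi (i j : 'I_4) : (i < j)%N -> (lo phi i + ell phi i <= lo phi j)%N.
Proof.
move=> ij; rewrite lo_add_ell /lo big_mkcond [X in (_ <= X)%N]big_mkcond /=.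
by apply: leq_sum => k _; case: ifP => // ki; rewrite (leq_ltn_trans ki ij).
Qed.

Lemma lo_add_ell_le_card phi i : (lo phi i + ell phi i <= #|V|)%N.
Proof.
by rewrite lo_add_ell -(sum_ell phi) big_mkcond leq_sum // => k _; case: ifP.
Qed.

Lemma compatible_inj phi al : compatible phi al -> injective al.
Proof. by case/andP=> /injectiveP. Qed.

Lemma compatible_block phi al v : compatible phi al ->
  (lo phi (phi v) <= al v < lo phi (phi v) + ell phi (phi v))%N.
Proof. by case/andP=> _ /forallP. Qed.

(* Comparisons are stated through [pos] to keep the coercion to [nat]
   syntactically uniform, which [lia] needs. *)
Definition pos al v : nat := al v.

Lemma compatible_lt phi al u v : compatible phi al ->
  (phi u < phi v)%N -> (pos al u < pos al v)%N.
Proof.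
move=> cal lt_uv; have := lo_add_ell_le phi lt_uv.
have := compatible_block u cal; have := compatible_block v cal; rewrite /pos; lia.
Qed.

Lemma compatible_ltE phi al u v : compatible phi al -> phi u != phi v ->
  (pos al u < pos al v)%N = (phi u < phi v)%N.
Proof.
move=> cal; case: (ltngtP (phi u) (phi v)) => [lt_uv|lt_vu|/val_inj->]; last by rewrite eqxx.
- by rewrite (compatible_lt cal lt_uv).
- by rewrite ltnNge ltnW ?(compatible_lt cal lt_vu).
Qed.

Lemma compatible_neq phi al u v : compatible phi al -> u != v -> pos al u != pos al v.
Proof. by move=> cal; apply: contra => /eqP/val_inj/(compatible_inj cal)->. Qed.

Definition block_rank phi v : nat :=
  #|[set u | (phi u == phi v) && (enum_rank u < enum_rank v)%N]|.

Lemma block_rank_lt phi v : (block_rank phi v < ell phi (phi v))%N.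
Proof.
apply: proper_card; apply/properP; split.
  by apply/subsetP => u; rewrite !inE => /andP[].
by exists v; rewrite !inE ?eqxx // ltnn andbF.
Qed.

Lemma block_rank_mono phi u v : phi u = phi v -> (enum_rank u < enum_rank v)%N ->
  (block_rank phi u < block_rank phi v)%N.
Proof.
move=> e lt_uv; apply: proper_card; apply/properP; split.
  by apply/subsetP => w; rewrite !inE e => /andP[-> /ltn_trans ->].
by exists u; rewrite !inE ?e ?eqxx ?lt_uv // ltnn andbF.
Qed.

Lemma block_position_lt phi v : (lo phi (phi v) + block_rank phi v < #|V|)%N.
Proof. by have := block_rank_lt phi v; have := lo_add_ell_le_card phi (phi v); lia. Qed.

Definition block_bij phi : {ffun V -> 'I_#|V|} :=
  [ffun v => Ordinal (block_position_lt phi v)].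

Lemma block_bij_compatible phi : compatible phi (block_bij phi).
Proof.
pose lex u v := (phi u < phi v)%N || (phi u == phi v) && (enum_rank u < enum_rank v)%N.
have lex_lt u v : lex u v -> (block_bij phi u < block_bij phi v)%N.
  rewrite !ffunE /=; case/orP=> [lt_uv|/andP[/eqP e lt_uv]].
    by have := lo_add_ell_le phi lt_uv; have := block_rank_lt phi u; lia.
  by have := block_rank_mono e lt_uv; rewrite e; lia.
have lex_total u v : u != v -> lex u v || lex v u.
  move=> ne_uv; rewrite /lex; case: ltngtP => [|//|/val_inj->]; rewrite ?orbT //= !eqxx /=.
  case: ltngtP => [|//|/val_inj/enum_rank_inj e_uv]; rewrite ?orbT //.
  by rewrite e_uv eqxx in ne_uv.
apply/andP; split; last first.
  by apply/forallP => v; rewrite ffunE /=; have := block_rank_lt phi v; lia.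
apply/injectiveP => u v e; apply/eqP; apply: contraT => /lex_total.
by case/orP=> /lex_lt; rewrite e ltnn.
Qed.

Definition ncompat phi (P : pred {ffun V -> 'I_#|V|}) : nat :=
  #|[set al | compatible phi al && P al]|.

Lemma ncompat_gt0 phi : (0 < ncompat phi predT)%N.
Proof. by apply/card_gt0P; exists (block_bij phi); rewrite inE block_bij_compatible. Qed.

Lemma eq_ncompat phi P Q : {in compatible phi, P =1 Q} -> ncompat phi P = ncompat phi Q.
Proof.
move=> eqPQ; apply: eq_card => al; rewrite !inE.
by case cal: (compatible phi al); rewrite //= eqPQ.
Qed.

Lemma ncompat_split phi P Q :
  ncompat phi P =
  (ncompat phi [pred al | P al && Q al] + ncompat phi [pred al | P al && ~~ Q al])%N.
Proof.
rewrite /ncompat -!sum1dep_card (bigID Q) /=.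
by congr (_ + _); apply: eq_bigl => al; rewrite andbA.
Qed.

Definition permute (s : {perm V}) al : {ffun V -> 'I_#|V|} := [ffun v => al (s v)].

Lemma compatible_permute phi (s : {perm V}) al : (forall v, phi (s v) = phi v) ->
  compatible phi al -> compatible phi (permute s al).
Proof.
move=> phi_s cal; apply/andP; split.
  by apply/injectiveP => u v; rewrite !ffunE => /(compatible_inj cal)/perm_inj.
by apply/forallP => v; rewrite ffunE -phi_s compatible_block.
Qed.

Lemma ncompat_permute phi (s : {perm V}) P : (forall v, phi (s v) = phi v) ->
  ncompat phi (fun al => P (permute s al)) = ncompat phi P.
Proof.
move=> phi_s; have phi_sV v : phi (s^-1%g v) = phi v by rewrite -{2}(permKV s v) phi_s.
have permuteK : cancel (permute s) (permute s^-1).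
  by move=> al; apply/ffunP => v; rewrite !ffunE permKV.
rewrite /ncompat -!sum1dep_card [RHS](reindex_inj (can_inj permuteK)) /=.
apply: eq_bigl => al; congr (_ && _); apply/idP/idP => [/(compatible_permute phi_s)//|].
by move/(compatible_permute phi_sV); rewrite permuteK.
Qed.

Lemma tperm_same_block phi x y : phi x = phi y -> forall v, phi (tperm x y v) = phi v.
Proof. by move=> e v; case: tpermP => [->|->|]. Qed.

Lemma pos_permute s al v : pos (permute s al) v = pos al (s v).
Proof. by rewrite /pos ffunE. Qed.

Definition satisfied (c : constraint V) : pred {ffun V -> 'I_#|V|} :=
  fun al => satisfies (pos al) c.

Lemma satisfiedE al x y z : satisfied (x, y, z) al =
  ((pos al y < pos al x < pos al z) || (pos al z < pos al x < pos al y))%N.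
Proof. by []. Qed.

Lemma exp_satE phi c :
  exp_sat phi c = (ncompat phi (satisfied c))%:R / (ncompat phi predT)%:R.
Proof. by congr (_%:R / _%:R); apply: eq_card => al; rewrite !inE andbT. Qed.

Lemma exp_sat_ratio phi c k :
  ncompat phi predT = (k * ncompat phi (satisfied c))%N -> exp_sat phi c = k%:R^-1.
Proof.
move=> total; have := ncompat_gt0 phi; rewrite total muln_gt0 => /andP[_ n_gt0].
rewrite exp_satE total natrM invfM mulrCA divff ?mulr1 //.
by rewrite pnatr_eq0 -lt0n.
Qed.

Lemma exp_sat_flip phi x y z : exp_sat phi (x, z, y) = exp_sat phi (x, y, z).
Proof.
rewrite !exp_satE; congr (_%:R / _); apply: eq_ncompat => al _.
by rewrite !satisfiedE orbC.
Qed.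

Lemma exp_sat_same_block phi x y z : wf_constraint (x, y, z) ->
  phi x = phi y -> phi x = phi z -> exp_sat phi (x, y, z) = 3^-1.
Proof.
rewrite /wf_constraint /cmid /cend1 /cend2 /= => /and3P[xy xz yz] exy exz.
set A := satisfied (x, y, z).
(* Swapping x with y, resp. with z, inside their common block shows that each of
   the three variables is equally often the middle one. *)
have nB : ncompat phi (satisfied (y, x, z)) = ncompat phi A.
  rewrite -(ncompat_permute A (tperm_same_block exy)); apply: eq_ncompat => al _.
  by rewrite /A !satisfiedE !pos_permute tpermL tpermR tpermD.
have nC : ncompat phi (satisfied (z, x, y)) = ncompat phi A.
  rewrite -(ncompat_permute A (tperm_same_block exz)); apply: eq_ncompat => al _.
  have zy : z != y by rewrite eq_sym.
  by rewrite /A !satisfiedE !pos_permute tpermL tpermR (tpermD xy zy) orbC.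
have : ncompat phi predT = (ncompat phi A + ncompat phi (satisfied (y, x, z))
                             + ncompat phi (satisfied (z, x, y)))%N.
  rewrite (ncompat_split _ _ A) [X in (_ + X)%N](ncompat_split _ _ (satisfied (y, x, z))).
  rewrite addnA.
  congr (_ + _ + _); apply: eq_ncompat => al cal;
    move: (compatible_neq cal xy) (compatible_neq cal xz) (compatible_neq cal yz);
    rewrite /A /= !satisfiedE; lia.
rewrite nB nC => total.
by apply: (@exp_sat_ratio _ _ 3); rewrite -/A total; lia.
Qed.

Lemma exp_sat_pair_block phi x y z : wf_constraint (x, y, z) ->
  phi x = phi y -> phi x != phi z -> exp_sat phi (x, y, z) = 2^-1.
Proof.
rewrite /wf_constraint /cmid /cend1 /cend2 /= => /and3P[xy xz yz] exy nxz.
set A := satisfied (x, y, z).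
have nyz : phi y != phi z by rewrite -exy.
(* z lies outside the common block of x and y, so swapping x and y toggles
   satisfaction. *)
have nB : ncompat phi [pred al | true && ~~ A al] = ncompat phi A.
  rewrite -(ncompat_permute A (tperm_same_block exy)); apply: eq_ncompat => al cal.
  rewrite /A /= !satisfiedE !pos_permute tpermL tpermR tpermD //.
  have nzx : phi z != phi x by rewrite eq_sym.
  have nzy : phi z != phi y by rewrite eq_sym.
  move: (compatible_ltE cal nxz) (compatible_ltE cal nyz).
  move: (compatible_ltE cal nzx) (compatible_ltE cal nzy) (compatible_neq cal xy).
  have : (phi z != phi y :> nat) by [].
  rewrite exy; lia.
by apply: (@exp_sat_ratio _ _ 2); rewrite -/A (ncompat_split _ _ A) nB mul2n -addnn.
Qed.

Lemma exp_sat_apart phi x y z : phi x != phi y -> phi x != phi z ->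
  exp_sat phi (x, y, z) = (satisfies (fun v => val (phi v)) (x, y, z))%:R.
Proof.
move=> nxy nxz; have [nyx nzx] : phi y != phi x /\ phi z != phi x by rewrite ![_ == phi x]eq_sym.
rewrite exp_satE; set s := satisfies _ _.
rewrite (@eq_ncompat _ _ (fun _ => s)) => [|al cal]; last first.
  by rewrite /satisfied /satisfies /s /= !(compatible_ltE cal).
have n_gt0 := ncompat_gt0 phi.
case: s; first by rewrite divff // pnatr_eq0 -lt0n.
suff -> : ncompat phi (fun _ => false) = 0%N by rewrite mul0r.
by apply/eqP; rewrite cards_eq0; apply/eqP/setP => al; rewrite !inE andbF.
Qed.

Lemma w1E c phi : wf_constraint c ->
  w1 c phi = (wtab (phi (cmid c)) (phi (cend1 c)) (phi (cend2 c)))%:~R / 6.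
Proof.
case: c => [[x y] z] wf_c; rewrite /w1 /wtab /cmid /cend1 /cend2 /=.
case: (eqVneq (phi x) (phi y)) => [exy|nxy]; case: (eqVneq (phi x) (phi z)) => [exz|nxz] /=.
- by rewrite exp_sat_same_block //; field.
- by rewrite exp_sat_pair_block //; field.
- have wf_flip : wf_constraint (x, z, y).
    by move: wf_c => /and3P[xy xz yz]; apply/and3P; split; rewrite // eq_sym.
  by rewrite -exp_sat_flip exp_sat_pair_block //; field.
rewrite exp_sat_apart // /satisfies /=.
by case: ifP => _ /=; field.
Qed.

End CompatibleBijections.

Section Assignments.
Variable V : finType.
Implicit Types (phi psi : {ffun V -> 'I_4}) (x y z u : V).

Definition upd psi u (k : 'I_4) : {ffun V -> 'I_4} :=
  [ffun v => if v == u then k else psi v].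

Lemma updE psi u k v : upd psi u k v = if v == u then k else psi v.
Proof. exact: ffunE. Qed.

Lemma sum_by_value (R : nmodType) u (F : {ffun V -> 'I_4} -> R) :
  \sum_phi F phi =
  \sum_(psi : {ffun V -> 'I_4} | psi u == ord0) \sum_(k < 4) F (upd psi u k).
Proof.
have updK psi k l : upd (upd psi u k) u l = upd psi u l.
  by apply/ffunP => v; rewrite !ffunE; case: eqP.
have upd_id psi : upd psi u (psi u) = psi.
  by apply/ffunP => v; rewrite !ffunE; case: eqP => // ->.
rewrite (partition_big (fun phi => phi u) predT) //= [RHS]exchange_big /=.
apply: eq_bigr => k _.
rewrite (reindex_onto (fun psi => upd psi u k) (fun phi => upd phi u ord0)) => [|phi /eqP <-].
  apply: eq_bigl => psi; rewrite ffunE !eqxx updK /=.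
  by apply/eqP/eqP => [<-|<-]; rewrite ?ffunE ?eqxx ?upd_id.
by rewrite updK upd_id.
Qed.

Lemma sum_mul_eq0 (R : pzSemiRingType) u (F G : {ffun V -> 'I_4} -> R) :
  (forall psi k, F (upd psi u k) = F psi) ->
  (forall psi, \sum_(k < 4) G (upd psi u k) = 0) ->
  \sum_phi F phi * G phi = 0.
Proof.
move=> F_u G_u; rewrite (sum_by_value u); apply: big1 => psi _.
by under eq_bigr => k _ do rewrite F_u; rewrite -mulr_sumr G_u mulr0.
Qed.

Definition triple_at x y z phi : 'I_4 * 'I_4 * 'I_4 := (phi x, phi y, phi z).

Lemma card_triple_at x y z t : x != y -> x != z -> y != z ->
  #|[set phi | triple_at x y z phi == t]| =
  #|[set phi | triple_at x y z phi == (ord0, ord0, ord0)]|.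
Proof.
move=> xy xz yz.
pose fam (t : 'I_4 * 'I_4 * 'I_4) v : pred 'I_4 :=
  if v == x then pred1 t.1.1 else if v == y then pred1 t.1.2
  else if v == z then pred1 t.2 else predT.
have famE t' : [set phi | triple_at x y z phi == t'] =i family (fam t').
  move=> phi; rewrite inE; apply/eqP/familyP => [<- v|].
    by rewrite /fam; do 3?case: eqP => [->|_]; rewrite ?inE.
  have yx : y != x by rewrite eq_sym.
  have [zx zy] : z != x /\ z != y by rewrite !(eq_sym z).
  case: t' => [[a b] c] phi_t; move: (phi_t x) (phi_t y) (phi_t z).
  rewrite /triple_at /fam !eqxx (negbTE yx) (negbTE zx) (negbTE zy) /= !inE.
  by move=> /eqP-> /eqP-> /eqP->.
rewrite (eq_card (famE t)) (eq_card (famE _)) !card_family; congr foldr.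
by apply: eq_map => v; rewrite /fam; do 3?case: eqP => _; rewrite ?card1.
Qed.

Lemma sum_triple_at x y z (G : 'I_4 -> 'I_4 -> 'I_4 -> rat) : x != y -> x != z -> y != z ->
  \sum_(phi : {ffun V -> 'I_4}) G (phi x) (phi y) (phi z) =
  #|{ffun V -> 'I_4}|%:R / 64 * \sum_(a < 4) \sum_(b < 4) \sum_(c < 4) G a b c.
Proof.
move=> xy xz yz; set m : rat := #|[set phi | triple_at x y z phi == (ord0, ord0, ord0)]|%:R.
have fiber t : \sum_(phi | triple_at x y z phi == t) (1 : rat) = m.
  by rewrite sumr_const /m -(card_triple_at t xy xz yz) cardsE.
have -> : #|{ffun V -> 'I_4}|%:R = 64 * m.
  rewrite -sum1_card natr_sum (partition_big (triple_at x y z) predT) //=.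
  by rewrite (eq_bigr _ (fun t _ => fiber t)) sumr_const !card_prod !card_ord mulr_natl.
rewrite [64 * m]mulrC mulfK // !pair_big /= big_distrr /=.
rewrite (partition_big (triple_at x y z) predT) //=; apply: eq_bigr => -[[a b] c] _.
rewrite -[in RHS](fiber (a, b, c)) mulr_suml.
by apply: eq_bigr => phi /eqP[<- <- <-]; rewrite mul1r.
Qed.

End Assignments.

Section Correlations.
Variable V : finType.
Implicit Types (p q : constraint V) (phi : {ffun V -> 'I_4}).

Local Notation N := (#|{ffun V -> 'I_4}|%:R : rat).

Definition test_fn q phi : rat := (ttab (phi (cmid q)) (phi (cend1 q)) (phi (cend2 q)))%:~R / 24.

Definition corr p q : rat :=
  \sum_(phi : {ffun V -> 'I_4}) (2 * w1 p phi - test_fn p phi) * test_fn q phi.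

Lemma corr_cube x y z q (h : 'I_4 -> 'I_4 -> 'I_4 -> int) : wf_constraint (x, y, z) ->
  (forall phi, ttab (phi (cmid q)) (phi (cend1 q)) (phi (cend2 q)) = h (phi x) (phi y) (phi z)) ->
  corr (x, y, z) q = N / 64 * (cube_corr h)%:~R / 576.
Proof.
move=> wf_p hq; have /and3P[xy xz yz] := wf_p.
rewrite /corr (eq_bigr (fun phi => ((8 * wtab (phi x) (phi y) (phi z)
  - ttab (phi x) (phi y) (phi z)) * h (phi x) (phi y) (phi z))%:~R / 576)) => [|phi _]; last first.
  by rewrite w1E // /test_fn hq /= !rmorphM !rmorphB /=; field.
rewrite (sum_triple_at (fun a b c => ((8 * wtab a b c - ttab a b c) * h a b c)%:~R / 576)) //.
rewrite /cube_corr -[RHS]mulrA; congr (_ * _); rewrite rmorph_sum big_distrl.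
by do 2!(apply: eq_bigr => ? _; rewrite rmorph_sum big_distrl).
Qed.

Lemma corr_self p : wf_constraint p -> corr p p = N * (11 / 384).
Proof.
case: p => [[x y] z] wf_p.
by rewrite (corr_cube (q := (x, y, z)) (h := ttab) wf_p (fun=> erefl)) cube_corr_ttab; field.
Qed.

Lemma same_vars_cases x y z q : wf_constraint q -> vars q = vars (x, y, z) -> cmid q != x ->
  q \in [:: (y, x, z); (y, z, x); (z, x, y); (z, y, x)].
Proof.
case: q => [[x' y'] z'] wf_q evars nx.
have mem v : v \in vars (x', y', z') -> [|| v == x, v == y | v == z] by rewrite evars !inE orbA.
move: (mem x') (mem y') (mem z') wf_q nx; rewrite /wf_constraint /cmid /cend1 /cend2 /=.
rewrite !inE !eqxx ?orbT.
by do 3!(move=> /(_ isT) /or3P[] /eqP->); rewrite ?eqxx ?andbF //= ?orbT.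
Qed.

Lemma corr_partner p q : wf_constraint p -> wf_constraint q ->
  vars q = vars p -> cmid q != cmid p -> corr p q = - (N * (11 / 768)).
Proof.
case: p => [[x y] z] wf_p wf_q evars nmid.
have [rot1 rot2 rot3 rot4] := cube_corr_rotated.
have := same_vars_cases wf_q evars nmid; rewrite !inE => /or4P[] /eqP->.
- rewrite (corr_cube (q := (y, x, z)) (h := fun a b c => ttab b a c) wf_p (fun=> erefl)).
  by rewrite rot1; field.
- rewrite (corr_cube (q := (y, z, x)) (h := fun a b c => ttab b c a) wf_p (fun=> erefl)).
  by rewrite rot2; field.
- rewrite (corr_cube (q := (z, x, y)) (h := fun a b c => ttab c a b) wf_p (fun=> erefl)).
  by rewrite rot3; field.
- rewrite (corr_cube (q := (z, y, x)) (h := fun a b c => ttab c b a) wf_p (fun=> erefl)).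
  by rewrite rot4; field.
Qed.

Lemma card_vars p : wf_constraint p -> #|vars p| = 3.
Proof.
case/and3P=> xy xz yz; rewrite /vars -setUA cardsU1 cards2 yz !inE.
by rewrite (negbTE xy) (negbTE xz).
Qed.

Lemma corr_disjoint p q : wf_constraint p -> wf_constraint q -> vars q != vars p -> corr p q = 0.
Proof.
move=> wf_p wf_q nvars.
have [u u_q u_p] : exists2 u, u \in vars q & u \notin vars p.
  by apply/subsetPn; apply: contra nvars => sub; rewrite eqEcard sub !card_vars.
apply: (sum_mul_eq0 (u := u)) => [psi k|psi].
  move: u_p; rewrite !w1E // /test_fn !updE /vars !inE !negb_or => /andP[/andP[ux uy] uz].
  by rewrite ![_ == u]eq_sym (negbTE ux) (negbTE uy) (negbTE uz).
rewrite /test_fn -big_distrl -rmorph_sum /=; apply/eqP; rewrite mulf_eq0; apply/orP; left.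
have /and3P[n12 n13 n23] := wf_q.
have [n21 n31 n32] : [/\ cend1 q != cmid q, cend2 q != cmid q & cend2 q != cend1 q].
  by split; rewrite eq_sym.
move: u_q; rewrite /vars !inE -orbA => /or3P[] /eqP->.
- under eq_bigr => k _ do rewrite !updE eqxx (negbTE n21) (negbTE n31).
  by rewrite ttab_sum1.
- under eq_bigr => k _ do rewrite !updE eqxx (negbTE n12) (negbTE n32).
  by rewrite ttab_sum2.
- under eq_bigr => k _ do rewrite !updE eqxx (negbTE n13) (negbTE n23).
  by rewrite ttab_sum3.
Qed.

Lemma ckey_eq p q : wf_constraint p -> wf_constraint q ->
  vars q = vars p -> cmid q = cmid p -> ckey q = ckey p.
Proof.
have ends (c : constraint V) : wf_constraint c -> [set cend1 c; cend2 c] = vars c :\ cmid c.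
  case/and3P=> n12 n13 _; apply/setP => v; rewrite !inE.
  by have [->|//] := eqVneq v (cmid c); rewrite (negbTE n12) (negbTE n13).
by move=> wf_p wf_q evars emid; rewrite /ckey (ends _ wf_p) (ends _ wf_q) evars emid.
Qed.

Lemma count_partners_le1 C p : uniq (map (@ckey V) C) -> no_complete_triple C -> p \in C ->
  (count (fun q => (q != p) && (vars q == vars p)) C <= 1)%N.
Proof.
move=> ukey nct pC; have key_inj := uniq_map_inj_in ukey.
have key_neq a b : a \in C -> b \in C -> a != b -> ckey a != ckey b.
  by move=> aC bC; apply: contra => /eqP/key_inj-> //.
rewrite -size_filter; have := filter_uniq (fun q => (q != p) && (vars q == vars p)) (map_uniq ukey).
have mem_part q s : [seq q <- C | (q != p) && (vars q == vars p)] = s -> q \in s ->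
    [/\ q \in C, q != p & vars q = vars p].
  by move=> <-; rewrite mem_filter => /andP[/andP[qp /eqP vq] qC].
case E: [seq q <- C | _] => [|q1 [|q2 r]] //=; rewrite inE negb_or => /andP[/andP[q12 _] _].
have [q1C q1p v1] := mem_part q1 _ E (mem_head _ _).
have [q2C q2p v2] := mem_part q2 _ E (mem_nth q1 (isT : 1 < size [:: q1, q2 & r])%N).
by case: (nct p q1 q2) => //; rewrite ?key_neq // ?(eq_sym p) ?v1 ?v2.
Qed.

Lemma sum_corr_ge C p : all (@wf_constraint V) C -> uniq (map (@ckey V) C) ->
  no_complete_triple C -> p \in C -> N * (11 / 768) <= \sum_(q <- C) corr p q.
Proof.
move=> wfC ukey nct pC; have wf_in q : q \in C -> wf_constraint q by move/(allP wfC).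
set partner := fun q => (q != p) && (vars q == vars p).
rewrite (bigD1_seq p pC (map_uniq ukey)) /= corr_self ?wf_in //.
rewrite (bigID (fun q => vars q == vars p)) /=.
have -> : \sum_(q <- C | (q != p) && (vars q != vars p)) corr p q = 0.
  by rewrite big_seq_cond big1 // => q /and3P[qC _ nv]; rewrite corr_disjoint ?wf_in.
rewrite addr0.
rewrite big_seq_cond (eq_bigr (fun=> - (N * (11 / 768)))) => [|q /andP[qC /andP[qp /eqP vq]]].
  rewrite -big_seq_cond -/partner big_const_seq iter_addr_0.
  have N_ge0 : 0 <= N := ler0n _ _.
  by case: (count partner C) (count_partners_le1 ukey nct pC) => [|[|]] //= _; lra.
apply: corr_partner; rewrite ?wf_in //; apply: contra qp => /eqP emid.
by apply/eqP/(uniq_map_inj_in ukey) => //; apply: ckey_eq; rewrite ?wf_in.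
Qed.

Lemma sum_corr_le C : \sum_(p <- C) \sum_(q <- C) corr p q <= \sum_phi (w C phi) ^+ 2.
Proof.
under eq_bigr => p _ do rewrite exchange_big /=.
rewrite exchange_big /=; apply: ler_sum => phi _.
under eq_bigr => p _ do rewrite -mulr_sumr.
rewrite -mulr_suml sumrB -mulr_sumr; exact: sqr_ge_mul_sub.
Qed.

End Correlations.

Theorem lemma7 (V : finType) (C : seq (constraint V)) :
  all (@wf_constraint V) C ->
  uniq (map (@ckey V) C) ->
  no_complete_triple C ->
  EX2 C >= (11%:R / 768%:R) * (size C)%:R.
Proof.
move=> wfC ukey nct; set N : rat := #|{ffun V -> 'I_4}|%:R.
have N_gt0 : 0 < N by rewrite ltr0n card_ffun expn_gt0 card_ord.
rewrite /EX2 -/N (ler_pdivlMr _ _ N_gt0); apply: le_trans (sum_corr_le C).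
have -> : 11%:R / 768%:R * (size C)%:R * N = \sum_(p <- C) N * (11 / 768).
  rewrite big_const_seq count_predT iter_addr_0 -(mulr_natr (N * (11 / 768))).
  by rewrite mulrAC [N * _]mulrC.
rewrite big_seq [X in _ <= X]big_seq; apply: ler_sum => p pC.
exact: sum_corr_ge.
Qed.
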